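(* Let $R$ be a ring with a linear Hausdorff topology, let $I$ be a well-ordered set, and let $\{e_i\}_{i\in I}$ be a summable family of idempotents with $e_ie_j=0$ whenever $i<j$. Put $e=\sum_{i\in I}e_i$. If $r\in R$ and $n\ge 1$ is an integer with $e^nr=0$, then $e_ir=0$ for all $i\in I$; in particular $er=0$.
   Context: A linear Hausdorff topology on a ring $R$ is a ring topology on $R$ having a basis $\mathfrak U$ of neighborhoods of $0$ consisting of left ideals, with $\bigcap_{U\in\mathfrak U}U=0$. A family $\{x_i\}_{i\in I}\subseteq R$ is summable to $r\in R$ if for every $U\in\mathfrak U$ there is a finite $F'\subseteq I$ with $\sum_{i\in F}x_i-r\in U$ for every finite $F$ with $F'\subseteq F\subseteq I$; one then writes $\sum_{i\in I}x_i=r$, and the family is called summable. *)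

From HB Require Import structures.
From mathcomp Require Import all_boot all_order all_algebra.
From mathcomp Require Import finmap.
Set Implicit Arguments. Unset Strict Implicit. Unset Printing Implicit Defensive.
Import Order.TTheory GRing.Theory.
Local Open Scope ring_scope.
Local Open Scope fset_scope.

Definition left_ideal (R : pzRingType) (U : R -> Prop) : Prop :=
  [/\ U 0, (forall x y, U x -> U y -> U (x - y))
    & (forall r x, U x -> U (r * x))].

(* [linear_hausdorff B]: B is a basis of neighbourhoods of 0 of a linear
   Hausdorff ring topology on R: a nonempty, downward directed family of left
   ideals, such that right multiplication is continuous at 0 (this is what makes
   the induced group topology a ring topology, since the members are left
   ideals), and whose intersection is {0}. *)
Record linear_hausdorff (R : pzRingType) (B : (R -> Prop) -> Prop) : Prop := {
  lh_nonempty : exists U, B U;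
  lh_ideal : forall U, B U -> left_ideal U;
  lh_directed : forall U V, B U -> B V ->
      exists2 W, B W & forall x, W x -> U x /\ V x;
  lh_rmul : forall U (a : R), B U -> exists2 V, B V & forall x, V x -> U (x * a);
  lh_hausdorff : forall x : R, (forall U, B U -> U x) -> x = 0
}.

Definition summable_to (R : pzRingType) (B : (R -> Prop) -> Prop)
    (I : choiceType) (x : I -> R) (r : R) : Prop :=
  forall U, B U -> exists F' : {fset I}, forall F : {fset I},
      F' `<=` F -> U (\sum_(i <- F) x i - r).

Definition summable (R : pzRingType) (B : (R -> Prop) -> Prop)
    (I : choiceType) (x : I -> R) : Prop :=
  exists r, summable_to B x r.

Definition well_ordered (d : Order.disp_t) (I : orderType d) : Prop :=
  well_founded (fun i j : I => (i < j)%O).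

From HB Require Import structures.
From mathcomp Require Import all_boot all_order all_algebra.
From mathcomp Require Import finmap.
Set Implicit Arguments. Unset Strict Implicit.
Import Order.TTheory GRing.Theory.
Local Open Scope ring_scope.

(* Multiplying e = sum e_j by e_i on the left and by y on the right kills every
   term except e_i e_i y = e_i y, provided e_j y = 0 for j < i: the terms with
   j > i vanish by orthogonality.  So e_i e y = e_i y.  By well-founded
   induction on i, if e_j (e^k r) = 0 for all j < i and all k, then
   e_i (e^k r) = e_i r for every k, and k = n gives e_i r = 0.  Finally e r is
   the sum of the e_i r, all of which vanish. *)

Section Summability.

Variables (R : pzRingType) (B : (R -> Prop) -> Prop).
Hypothesis hB : linear_hausdorff B.
Variable I : choiceType.

Lemma summable_to_unique (x : I -> R) (s t : R) :
  summable_to B x s -> summable_to B x t -> s = t.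
Proof.
move=> xs xt; apply/eqP; rewrite -subr_eq0; apply/eqP.
apply: (lh_hausdorff hB) => U BU.
have [F1 HF1] := xs U BU; have [F2 HF2] := xt U BU.
have [_ Usub _] := lh_ideal hB BU.
have := Usub _ _ (HF2 _ (fsubsetUr F1 F2)) (HF1 _ (fsubsetUl F1 F2)).
by rewrite opprB addrC addrA subrK.
Qed.

Lemma summable_to_finsupp (x : I -> R) (F0 : {fset I}) :
  (forall j, j \notin F0 -> x j = 0) -> summable_to B x (\sum_(j <- F0) x j).
Proof.
move=> x0 U BU; exists F0 => F F0F.
have [U0 _ _] := lh_ideal hB BU.
by rewrite (big_fset_incl _ F0F) ?subrr // => j _; apply: x0.
Qed.

Lemma summable_to_mull (x : I -> R) (s a : R) :
  summable_to B x s -> summable_to B (fun i => a * x i) (a * s).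
Proof.
move=> xs U BU; have [F' HF] := xs U BU; exists F' => F F'F.
have [_ _ Umul] := lh_ideal hB BU.
by have := Umul a _ (HF F F'F); rewrite mulrBr mulr_sumr.
Qed.

Lemma summable_to_mulr (x : I -> R) (s a : R) :
  summable_to B x s -> summable_to B (fun i => x i * a) (s * a).
Proof.
move=> xs U BU; have [V BV HV] := lh_rmul hB a BU.
have [F' HF] := xs V BV; exists F' => F F'F.
by have := HV _ (HF F F'F); rewrite mulrBl mulr_suml.
Qed.

End Summability.

Section OrthogonalIdempotents.

Variables (R : pzRingType) (B : (R -> Prop) -> Prop).
Hypothesis hB : linear_hausdorff B.
Variables (d : Order.disp_t) (I : orderType d) (e_ : I -> R) (e : R).
Hypothesis hidem : forall i, e_ i * e_ i = e_ i.
Hypothesis horth : forall i j, (i < j)%O -> e_ i * e_ j = 0.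
Hypothesis he : summable_to B e_ e.

Lemma idem_mul_sum_mul (i : I) (y : R) :
  (forall j, (j < i)%O -> e_ j * y = 0) -> e_ i * (e * y) = e_ i * y.
Proof.
move=> hy.
have sum_eiejy := summable_to_mull hB (e_ i) (summable_to_mulr hB y he).
have finsupp_eiejy : forall j, j \notin [fset i]%fset -> e_ i * (e_ j * y) = 0.
  move=> j; rewrite inE => ji.
  case: (ltgtP j i) => [lt_ji|lt_ij|eq_ji]; last by rewrite eq_ji eqxx in ji.
  - by rewrite hy ?mulr0.
  - by rewrite mulrA horth ?mul0r.
have := summable_to_unique hB sum_eiejy (summable_to_finsupp hB finsupp_eiejy).
by move=> ->; rewrite big_seq_fset1 mulrA hidem.
Qed.

Lemma idem_mul_pow_sum_mul (i : I) (y : R) :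
  (forall j k, (j < i)%O -> e_ j * (e ^+ k * y) = 0) ->
  forall k, e_ i * (e ^+ k * y) = e_ i * y.
Proof.
move=> hy; elim=> [|k IHk]; first by rewrite expr0 mul1r.
by rewrite exprS -mulrA idem_mul_sum_mul // => j /hy; apply.
Qed.

Lemma orth_idem_annihilate (r : R) (n : nat) :
  well_founded (fun i j : I => (i < j)%O) -> e ^+ n * r = 0 ->
  forall i, e_ i * r = 0.
Proof.
move=> wf hr.
suff ann : forall i k, e_ i * (e ^+ k * r) = 0.
  by move=> i; have := ann i 0%N; rewrite expr0 mul1r.
move=> i; induction i as [i IH] using (well_founded_ind wf).
have eir : e_ i * r = 0.
  by rewrite -(idem_mul_pow_sum_mul (fun j k ji => IH j ji k) n) hr mulr0.
by move=> k; rewrite idem_mul_pow_sum_mul // => j k' /IH; apply.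
Qed.

End OrthogonalIdempotents.

Theorem lemma5 (R : pzRingType) (B : (R -> Prop) -> Prop)
    (hB : linear_hausdorff B)
    (d : Order.disp_t) (I : orderType d) (hI : well_ordered I)
    (e_ : I -> R)
    (hidem : forall i, e_ i * e_ i = e_ i)
    (horth : forall i j, (i < j)%O -> e_ i * e_ j = 0)
    (e : R) (he : summable_to B e_ e)
    (r : R) (n : nat) (hn : (1 <= n)%N) (hr : e ^+ n * r = 0) :
  (forall i, e_ i * r = 0) /\ e * r = 0.
Proof.
have eir := orth_idem_annihilate hB hidem horth he hI hr.
split=> //.
have sum0 : summable_to B (fun i => e_ i * r) (\sum_(j <- fset0) e_ j * r).
  by apply: summable_to_finsupp.
by rewrite (summable_to_unique hB (summable_to_mulr hB r he) sum0) big_seq_fset0.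
Qed.
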